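(* Let $0<p\le2$. The function $r\mapsto\|r\|_p^p$ from $\mathbb{R}_\infty$ to $\mathbb{R}_+$ is a morphism on an arbitrary large subset of $\mathbb{R}_\infty$: for every $N,M\in\mathbb{N}$ and every $s_1,\dots,s_M\in\mathbb{R}_+$ there exist elements $g_{n,k}\in\mathbb{R}_\infty$ ($1\le n\le N$, $1\le k\le M$) such that $\|g_{n,j}^{-1}g_{m,k}\|_p^p=s_j+s_k$ for all $j,k$ and all $n\ne m$.
   Context: $\mathbb{R}_+=[0,\infty)$. $\mathbb{R}_\infty$ (the free real line with infinitely many generators) is the free product of countably many copies $\mathbb{R}^{(1)},\mathbb{R}^{(2)},\dots$ of the additive group $\mathbb{R}$. Every $r\ne e$ in $\mathbb{R}_\infty$ is uniquely a reduced word $r=x_1x_2\cdots x_n$ with $x_j\in\mathbb{R}^{(i_j)}\setminus\{0\}$ and $i_j\ne i_{j+1}$; its $\ell^p$ length is $\|r\|_p=(\sum_{j=1}^n|x_j|^p)^{1/p}$, and $\|e\|_p=0$. *)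

From Stdlib Require Import Reals List Arith.
Open Scope R_scope.
Import ListNotations.

(* The free real line R_infty = free product of copies R^(i), i : nat
   (copy index i stands for R^(i+1)).  Elements are reduced words:
   lists of letters (i, x) with x <> 0 in copy i and consecutive letters
   in different copies. *)
Definition letter := (nat * R)%type.
Definition word := list letter.

Fixpoint reduced (w : word) : Prop :=
  match w with
  | [] => True
  | (i, x) :: w' =>
      x <> 0 /\
      match w' with
      | [] => True
      | (j, _) :: _ => i <> j
      end /\ reduced w'
  end.

Definition push (a : letter) (w : word) : word :=
  let (i, x) := a in
  if Req_EM_T x 0 then w else
  match w with
  | [] => [(i, x)]
  | (j, y) :: w' =>
      if Nat.eq_dec i j then
        (if Req_EM_T (x + y) 0 then w' else (i, x + y) :: w')
      else (i, x) :: w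
  end.

Definition wmul (u v : word) : word := fold_right push v u.

Definition winv (u : word) : word :=
  rev (map (fun a : letter => (fst a, - snd a)) u).

(* ||r||_p^p = sum_j |x_j|^p  (letters are nonzero, so Rpower is the usual power;
   the empty word gives 0) *)
Definition lp_pow (p : R) (w : word) : R :=
  fold_right (fun a acc => Rpower (Rabs (snd a)) p + acc) 0 w.

(* Take g_{n,k} to be the single letter s_k^(1/p) in the n-th copy of R.  For
   n <> m the product g_{n,j}^-1 g_{m,k} is the reduced word of two letters in
   different copies, so its p-th power length is (s_j^(1/p))^p + (s_k^(1/p))^p
   = s_j + s_k. *)
From Stdlib Require Import Reals List Arith Lra.
Open Scope R_scope.
Import ListNotations.

Definition atom (i : nat) (x : R) : word :=
  if Req_EM_T x 0 then [] else [(i, x)].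

Definition root (p a : R) : R :=
  if Rlt_dec 0 a then Rpower a (/ p) else 0.

Lemma reduced_atom (i : nat) (x : R) : reduced (atom i x).
Proof. unfold atom; destruct (Req_EM_T x 0); simpl; auto. Qed.

Lemma winv_atom (i : nat) (x : R) : winv (atom i x) = atom i (- x).
Proof.
  unfold atom; destruct (Req_EM_T x 0) as [hx|hx];
    destruct (Req_EM_T (- x) 0); simpl; auto; lra.
Qed.

Lemma wmul_atom (i j : nat) (x y : R) :
  i <> j -> wmul (atom i x) (atom j y) = atom i x ++ atom j y.
Proof.
  intros hij; unfold atom, wmul.
  destruct (Req_EM_T x 0) as [_|hx]; simpl; auto.
  destruct (Req_EM_T x 0) as [e|_]; [contradiction|].
  destruct (Req_EM_T y 0); simpl; auto.
  destruct (Nat.eq_dec i j); [contradiction|auto].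
Qed.

Lemma lp_pow_app (p : R) (u v : word) :
  lp_pow p (u ++ v) = lp_pow p u + lp_pow p v.
Proof. induction u as [|a u IH]; simpl; [lra|rewrite IH; lra]. Qed.

Lemma lp_pow_atom_opp (p : R) (i : nat) (x : R) :
  lp_pow p (atom i (- x)) = lp_pow p (atom i x).
Proof.
  unfold atom; destruct (Req_EM_T x 0) as [hx|hx];
    destruct (Req_EM_T (- x) 0); simpl; try rewrite Rabs_Ropp; auto; lra.
Qed.

Lemma Rpower_inv_l (a p : R) : 0 < p -> 0 < a -> Rpower (Rpower a (/ p)) p = a.
Proof.
  intros hp ha; rewrite Rpower_mult, Rinv_l by lra; apply Rpower_1, ha.
Qed.

Lemma lp_pow_atom_root (p a : R) (i : nat) :
  0 < p -> 0 <= a -> lp_pow p (atom i (root p a)) = a.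
Proof.
  intros hp ha; unfold atom, root.
  destruct (Rlt_dec 0 a) as [ha'|ha'].
  - assert (hpos : 0 < Rpower a (/ p)) by apply exp_pos.
    destruct (Req_EM_T (Rpower a (/ p)) 0); [lra|]; simpl.
    rewrite Rabs_right, Rpower_inv_l by lra; lra.
  - destruct (Req_EM_T 0 0); simpl; lra.
Qed.

Theorem proposition4p7 (p : R) (hp0 : 0 < p) (hp2 : p <= 2)
  (N M : nat) (s : nat -> R) (hs : forall k, (k < M)%nat -> 0 <= s k) :
  exists g : nat -> nat -> word,
    (forall n k, (n < N)%nat -> (k < M)%nat -> reduced (g n k)) /\
    (forall n m j k, (n < N)%nat -> (m < N)%nat -> (j < M)%nat -> (k < M)%nat ->
       n <> m -> lp_pow p (wmul (winv (g n j)) (g m k)) = s j + s k).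
Proof.
  exists (fun n k => atom n (root p (s k))); split.
  - intros n k _ _; apply reduced_atom.
  - intros n m j k _ _ hj hk hnm.
    rewrite winv_atom, wmul_atom, lp_pow_app, lp_pow_atom_opp by exact hnm.
    rewrite !lp_pow_atom_root by auto; reflexivity.
Qed.
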